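(* For every unweighted congestion game $\mathcal{G}$ with quadratic latency functions, $\mathrm{PoS}(\mathcal{G})\le 2.362$.
   Context: A weighted congestion game consists of a finite set $[n]=\{1,\dots,n\}$ of players, a finite set $E$ of resources, for each player $i$ a weight $w_i>0$ and a nonempty finite strategy set $\Sigma_i\subseteq 2^E$, and for each resource $e$ a latency function $\ell_e:\mathbb{R}_{\ge 0}\to\mathbb{R}_{\ge 0}$. It is unweighted if $w_i=1$ for all $i$. Quadratic latency functions means $\ell_e(x)=\sum_{j=0}^{2}\alpha_{e,j}x^j$ with all $\alpha_{e,j}\ge 0$. For a strategy profile $S=(s_1,\dots,s_n)$, the congestion of $e$ is $L_e(S)=\sum_{i:\,e\in s_i}w_i$, the cost of player $i$ is $c_i(S)=\sum_{e\in s_i}\ell_e(L_e(S))$, and $\mathrm{SUM}(S)=\sum_i c_i(S)$; $S^*$ minimizes $\mathrm{SUM}$. A pure Nash equilibrium (PNE) is a profile $S$ with $c_i(S)\le c_i(S_{-i}\diamond t)$ for all $i$ and $t\in\Sigma_i$, where $(S_{-i}\diamond t)$ replaces $s_i$ by $t$. $\mathrm{PoS}(\mathcal{G})=\min_{S\ \mathrm{PNE}}\mathrm{SUM}(S)/\mathrm{SUM}(S^* )$. *)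

From HB Require Import structures.
From mathcomp Require Import all_boot all_order all_algebra.
Set Implicit Arguments. Unset Strict Implicit. Unset Printing Implicit Defensive.
Import Order.TTheory GRing.Theory Num.Theory.
Local Open Scope ring_scope.

Section Congestion.
Variables (R : realFieldType) (n : nat) (E : finType).
Variable Sigma : 'I_n -> {set {set E}}.
Variables (a0 a1 a2 : E -> R).

Definition latency (e : E) (x : R) : R := a0 e + a1 e * x + a2 e * x ^+ 2.

Definition profile := {ffun 'I_n -> {set E}}.

Definition valid_profile (S : profile) : Prop := forall i, S i \in Sigma i.

Definition load (S : profile) (e : E) : R := (#|[set i | e \in S i]|)%:R.

Definition cost (S : profile) (i : 'I_n) : R :=
  \sum_(e in S i) latency e (load S e).

Definition SUM (S : profile) : R := \sum_(i < n) cost S i.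

Definition deviate (S : profile) (i : 'I_n) (t : {set E}) : profile :=
  [ffun j => if j == i then t else S j].

Definition is_PNE (S : profile) : Prop :=
  valid_profile S /\
  forall (i : 'I_n) (t : {set E}), t \in Sigma i -> cost S i <= cost (deviate S i t) i.

End Congestion.

From HB Require Import structures.
From mathcomp Require Import all_boot all_order all_algebra.
From mathcomp Require Import ring lra.
Import Order.TTheory GRing.Theory Num.Theory.
Set Implicit Arguments. Unset Strict Implicit. Unset Printing Implicit Defensive.
Local Open Scope ring_scope.

(* The equilibrium is a global minimiser S of Rosenthal's potential
   Phi(S) = sum_e sum_{k=1}^{L_e(S)} l_e(k); Phi is an exact potential, so S is
   a pure Nash equilibrium.  For any profile S' two facts hold:
   - Nash:      SUM(S) <= sum_e L_e(S') l_e(L_e(S) + 1),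
   - potential: Phi(S) <= Phi(S').
   If a resource-wise inequality
     a x l(x) + b y l(x+1) + c (P(y) - P(x)) <= d y l(y)     (x, y in N)
   holds with b, c >= 0 (P the partial sums of l), summing it over the
   resources and combining with both facts gives SUM(S) <= d/(a+b) SUM(S'). *)

(* For a natural number m we have m <= m^2; this is the integrality fact that
   makes the monomial inequalities below true (they fail on the reals). *)
Lemma natr_le_sqr (R : realFieldType) (m : nat) : (m%:R : R) <= m%:R ^+ 2.
Proof.
case: m => [|m]; first by rewrite mulr0n expr0n.
by rewrite expr2 ler_peMl // ler1n.
Qed.

(* Resource inequality for the linear monomial l(k) = k, whose partial sums
   are x(x+1)/2 (the factor 5724 is c / 2 for c = 1908 * 6). *)
Lemma monomial1_ineq (R : realFieldType) (x y : nat) :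
  3276 * (x%:R : R) ^+ 2 + 2724 * y%:R * (x%:R + 1)
  + 5724 * (y%:R * (y%:R + 1) - x%:R * (x%:R + 1)) <= 14172 * y%:R ^+ 2.
Proof.
have hx := natr_le_sqr R x; have hy := natr_le_sqr R y.
have x0 := ler0n R x; have y0 := ler0n R y.
nra.
Qed.

(* Resource inequality for the quadratic monomial l(k) = k^2, whose partial
   sums are x(x+1)(2x+1)/6 (the factor 1908 is c / 6). *)
Lemma monomial2_ineq (R : realFieldType) (x y : nat) :
  3276 * (x%:R : R) ^+ 3 + 2724 * y%:R * (x%:R + 1) ^+ 2
  + 1908 * (y%:R * (y%:R + 1) * (2 * y%:R + 1) - x%:R * (x%:R + 1) * (2 * x%:R + 1))
  <= 14172 * y%:R ^+ 3.
Proof.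
have hx := natr_le_sqr R x; have hy := natr_le_sqr R y.
have x0 := ler0n R x; have y0 := ler0n R y.
set X := (x%:R : R) in hx x0 *; set Y := (y%:R : R) in hy y0 *.
(* Certificate: squares vanishing near the ray X = 3.363 Y, where the
   inequality is tight, together with the integrality facts X <= X^2, Y <= Y^2. *)
have sq_x : 0 <= X * (X - 3363/1000 * Y) ^+ 2 by rewrite mulr_ge0 ?sqr_ge0.
have sq_y : 0 <= Y * (X - 3363/1000 * Y) ^+ 2 by rewrite mulr_ge0 ?sqr_ge0.
have int_yy : 0 <= Y * (Y ^+ 2 - Y) by rewrite mulr_ge0 ?subr_ge0.
have int_xx : 0 <= X * (X ^+ 2 - X) by rewrite mulr_ge0 ?subr_ge0.
have int_xy : 0 <= X * (Y ^+ 2 - Y) by rewrite mulr_ge0 ?subr_ge0.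
have int_yx : 0 <= Y * (X ^+ 2 - X) by rewrite mulr_ge0 ?subr_ge0.
nra.
Qed.

Section PotentialGame.
Variables (R : realFieldType) (n : nat) (E : finType).
Variable Sigma : 'I_n -> {set {set E}}.
Variables (a0 a1 a2 : E -> R).
Hypothesis coef_ge0 : forall e, 0 <= a0 e /\ 0 <= a1 e /\ 0 <= a2 e.

Local Notation lat := (latency a0 a1 a2).
Local Notation cost := (cost a0 a1 a2).
Local Notation SUM := (SUM a0 a1 a2).
Local Notation valid := (valid_profile Sigma).
Implicit Types (S : profile n E) (i : 'I_n) (t : {set E}) (e : E).

Lemma latency_mono e (u v : R) : 0 <= u -> u <= v -> lat e u <= lat e v.
Proof.
move=> u0 uv; have [_ [h1 h2]] := coef_ge0 e.
have v0 : 0 <= v by apply: le_trans uv.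
have lin : a1 e * u <= a1 e * v by apply: ler_wpM2l.
have quad : a2 e * u ^+ 2 <= a2 e * v ^+ 2 by rewrite ler_wpM2l // ler_sqr.
rewrite /latency; lra.
Qed.

Definition users S e : nat := #|[set i | e \in S i]|.
Definition others S i e : nat := #|[set j | (j != i) && (e \in S j)]|.

Lemma users_split S i e : users S e = (others S i e + (e \in S i))%N.
Proof.
rewrite /users (cardsD1 i) inE addnC; congr (_ + _)%N.
by apply: eq_card => j; rewrite !inE.
Qed.

Lemma deviate_self S i t : deviate S i t i = t.
Proof. by rewrite ffunE eqxx. Qed.

Lemma others_deviate S i t e : others (deviate S i t) i e = others S i e.
Proof. by apply: eq_card => j; rewrite !inE ffunE; case: (j =P i). Qed.

Definition Pot e (m : nat) : R := \sum_(k < m) lat e (k.+1)%:R.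

Lemma PotS e m : Pot e m.+1 = Pot e m + lat e (m.+1)%:R.
Proof. by rewrite /Pot big_ord_recr. Qed.

Lemma Pot_closed e m : 6 * Pot e m =
  6 * a0 e * m%:R + 3 * a1 e * (m%:R * (m%:R + 1))
  + a2 e * (m%:R * (m%:R + 1) * (2 * m%:R + 1)).
Proof.
elim: m => [|m IH]; first by rewrite /Pot big_ord0 !mulr0n; ring.
by rewrite PotS mulrDr IH /latency mulrSr; ring.
Qed.

Definition Phi S : R := \sum_e Pot e (users S e).

Lemma Phi_split S i : Phi S = \sum_e Pot e (others S i e) + cost S i.
Proof.
rewrite /Phi /cost.
under eq_bigr => e _ do rewrite (users_split S i e).
under [X in _ + X]eq_bigr => e _ do rewrite /load -/(users S e) (users_split S i e).
rewrite [X in _ + X]big_mkcond -big_split /=; apply: eq_bigr => e _.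
by case: (e \in S i); rewrite ?addn1 ?addn0 ?PotS ?addr0.
Qed.

Lemma Phi_exact S i t :
  Phi (deviate S i t) - cost (deviate S i t) i = Phi S - cost S i.
Proof.
rewrite (Phi_split (deviate S i t) i) (Phi_split S i) !addrK.
by apply: eq_bigr => e _; rewrite others_deviate.
Qed.

Lemma exists_Phi_minimizer : (forall i, Sigma i != set0) ->
  exists2 S, valid S & forall S', valid S' -> Phi S <= Phi S'.
Proof.
move=> nonempty.
pose validb (S : profile n E) := [forall i, S i \in Sigma i].
pose S0 : profile n E := [ffun i => odflt set0 [pick t in Sigma i]].
have validS0 : validb S0.
  apply/forallP => i; rewrite ffunE; case: pickP => [t //|none].
  by have /set0Pn [t ht] := nonempty i; move: (none t); rewrite ht.
case: (arg_minP Phi validS0) => S /forallP validS Smin.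
by exists S => // S' /forallP; apply: Smin.
Qed.

Lemma Phi_minimizer_is_PNE S : valid S ->
  (forall S', valid S' -> Phi S <= Phi S') -> is_PNE Sigma a0 a1 a2 S.
Proof.
move=> validS Smin; split=> // i t ht.
have valid_dev : valid (deviate S i t).
  by move=> j; rewrite ffunE; case: (j =P i) => [->|_].
have := Smin _ valid_dev; have := Phi_exact S i t; lra.
Qed.

Lemma cost_deviate_le S i t :
  cost (deviate S i t) i <= \sum_(e in t) lat e ((users S e)%:R + 1).
Proof.
rewrite /cost deviate_self; apply: ler_sum => e et.
apply: latency_mono => //.
rewrite /load -/(users _ e) (users_split _ i) deviate_self et others_deviate.
by rewrite (users_split S i e) addn1 -natr1 lerD2r ler_nat leq_addr.
Qed.

Lemma sum_players_resources (T : profile n E) (f : E -> R) :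
  \sum_i \sum_(e in T i) f e = \sum_e (users T e)%:R * f e.
Proof.
under eq_bigr do rewrite big_mkcond /=.
rewrite exchange_big /=; apply: eq_bigr => e _.
rewrite -big_mkcond /= mulr_natl -sumr_const.
by apply: eq_bigl => i; rewrite inE.
Qed.

Lemma SUM_resources S : SUM S = \sum_e (users S e)%:R * lat e (users S e)%:R.
Proof. by rewrite /SUM /cost sum_players_resources. Qed.

Lemma PNE_SUM_le S S' : is_PNE Sigma a0 a1 a2 S -> valid S' ->
  SUM S <= \sum_e (users S' e)%:R * lat e ((users S e)%:R + 1).
Proof.
move=> [_ nash] validS'; rewrite -sum_players_resources /SUM.
apply: ler_sum => i _; apply: le_trans (nash i (S' i) (validS' i)) _.
exact: cost_deviate_le.
Qed.

Lemma potential_SUM_bound (a b c d : R) S S' :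
  0 <= b -> 0 <= c -> 0 < a + b ->
  (forall e (x y : nat),
     a * (x%:R * lat e x%:R) + b * (y%:R * lat e (x%:R + 1))
     + c * (Pot e y - Pot e x) <= d * (y%:R * lat e y%:R)) ->
  is_PNE Sigma a0 a1 a2 S -> valid S' -> Phi S <= Phi S' ->
  SUM S <= d / (a + b) * SUM S'.
Proof.
move=> b0 c0 ab0 resource eqS validS' PhiSS'.
have nash := ler_wpM2l b0 (PNE_SUM_le eqS validS').
have pot : 0 <= c * (Phi S' - Phi S) by rewrite mulr_ge0 ?subr_ge0.
have summed := ler_sum (index_enum E) (fun e (_ : predT e) =>
  resource e (users S e) (users S' e)).
rewrite !big_split /= -!mulr_sumr sumrB -!SUM_resources in summed.
rewrite mulrAC ler_pdivlMr //.
rewrite /Phi in pot; lra.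
Qed.

(* The resource inequality for quadratic latencies with the constants of the
   2.362 bound: a nonnegative combination of the monomial inequalities. *)
Lemma quadratic_resource_ineq e (x y : nat) :
  3276 * (x%:R * lat e x%:R) + 2724 * (y%:R * lat e (x%:R + 1))
  + (1908 * 6) * (Pot e y - Pot e x) <= 14172 * (y%:R * lat e y%:R).
Proof.
have [h0 [h1 h2]] := coef_ge0 e.
have const := mulr_ge0 h0 (ler0n R x).
have lin := ler_wpM2l h1 (monomial1_ineq R x y).
have quad := ler_wpM2l h2 (monomial2_ineq R x y).
rewrite -mulrA mulrBr !Pot_closed /latency; nra.
Qed.

End PotentialGame.

Theorem mainTheorem9 (R : realFieldType) (n : nat) (E : finType)
    (Sigma : 'I_n -> {set {set E}}) (a0 a1 a2 : E -> R)
    (hSigma : forall i, Sigma i != set0)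
    (ha : forall e, 0 <= a0 e /\ 0 <= a1 e /\ 0 <= a2 e) :
  exists S : profile n E,
    is_PNE Sigma a0 a1 a2 S /\
    forall S' : profile n E, valid_profile Sigma S' ->
      SUM a0 a1 a2 S <= (2362%:R / 1000%:R) * SUM a0 a1 a2 S'.
Proof.
have [S validS Smin] := exists_Phi_minimizer a0 a1 a2 hSigma.
have eqS := Phi_minimizer_is_PNE validS Smin.
exists S; split => // S' validS'.
have -> : 2362%:R / 1000%:R = 14172 / (3276 + 2724) :> R by field.
apply: (potential_SUM_bound ha _ _ _ (quadratic_resource_ineq ha) eqS validS'
  (Smin S' validS')); lra.
Qed.
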